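(* Let $n\ge1$ and let $G$ be a cyclic subgroup of $\mathfrak{S}_n$. If the field $k$ is of sufficiently large cardinality, with $\mathrm{char}(k)\ne2$ whenever $|G|$ is even, then there is an $n\times n$ quantum parameter matrix $\mathfrak{q}$ with $\mathrm{Aut}_{\mathrm{gr}}(S_{\mathfrak{q}}(k^n))\cong(k^\times)^n\rtimes G$.
   Context: An $n\times n$ quantum parameter matrix is a matrix $\mathfrak{q}=(q_{ij})$ over $k$ with $q_{ii}=1$ and $q_{ij}q_{ji}=1$ for all $i,j$. $S_{\mathfrak{q}}(k^n)$ is the $k$-algebra generated by the standard basis $v_1,\dots,v_n$ of $k^n$ with relations $v_jv_i=q_{ij}v_iv_j$, graded by $\deg v_i=1$; $\mathrm{Aut}_{\mathrm{gr}}$ denotes its group of degree-preserving algebra automorphisms, viewed as a subgroup of $\mathrm{GL}(n,k)$. In $(k^\times)^n\rtimes G$, $(k^\times)^n$ is the group of invertible diagonal matrices and $G\subseteq\mathfrak{S}_n$ acts by permuting coordinates (a group of monomial matrices). *)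

From HB Require Import structures.
From mathcomp Require Import all_boot all_order all_algebra all_fingroup all_solvable.
Set Implicit Arguments. Unset Strict Implicit. Unset Printing Implicit Defensive.
Import GRing.Theory.
Local Open Scope ring_scope.

Definition quantum_param_matrix (k : fieldType) (n : nat) (q : 'M[k]_n) : Prop :=
  forall i j : 'I_n, q i i = 1 /\ q i j * q j i = 1.

(* V (x) V is modelled by n x n matrices: v_i (x) v_j  <->  delta_mx i j.
   The defining quadratic relation v_j v_i - q_ij v_i v_j of S_q(k^n). *)
Definition qrel (k : fieldType) (n : nat) (q : 'M[k]_n) (i j : 'I_n) : 'M[k]_n :=
  delta_mx j i - q i j *: delta_mx i j.

Definition in_qrel_span (k : fieldType) (n : nat) (q : 'M[k]_n) (M : 'M[k]_n) : Prop :=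
  exists c : 'M[k]_n, M = \sum_(i < n) \sum_(j < n) c i j *: qrel q i j.

(* The linear map g : v_i |-> sum_a A a i v_a (column i of A is g v_i)
   extends to an algebra endomorphism of S_q(k^n) = T(V)/(R) iff
   (g (x) g)(R) is contained in R; (g (x) g)(M) = A M A^T. *)
Definition preserves_qrel (k : fieldType) (n : nat) (q : 'M[k]_n) (A : 'M[k]_n) : Prop :=
  forall i j : 'I_n, in_qrel_span q (A *m qrel q i j *m A^T).

(* Aut_gr(S_q(k^n)) as a subset of GL(n,k): degree-preserving algebra
   automorphisms, i.e. invertible A such that both A and A^-1 induce
   algebra endomorphisms. *)
Definition Aut_gr (k : fieldType) (n : nat) (q : 'M[k]_n) (A : 'M[k]_n) : Prop :=
  [/\ A \in unitmx, preserves_qrel q A & preserves_qrel q (invmx A)].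

(* (k^x)^n ⋊ G as a group of monomial matrices: D * P_sigma with D
   invertible diagonal and sigma in G. *)
Definition monomial_group (k : fieldType) (n : nat) (G : {set 'S_n}) (A : 'M[k]_n) : Prop :=
  exists d : 'rV[k]_n, (forall i, d 0 i != 0) /\
    exists2 s, s \in G & A = diag_mx d *m perm_mx s.

Definition card_at_least (k : eqType) (N : nat) : Prop :=
  exists s : seq k, uniq s /\ (N <= size s)%N.

From mathcomp Require Import all_boot all_order all_algebra all_fingroup all_solvable.
From mathcomp Require Import zify ring.

(* Take q constant on the orbits of G acting on ordered pairs of indices:
   q_ij = -1 if some element of G swaps i and j, and otherwise q_ij is a
   generic scalar attached to the orbit of (i, j), its inverse being attached
   to the reverse orbit.  Then q_ij <> 1 off the diagonal (swaps only exist
   when |G| is even, whence char k <> 2), which forces every graded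
   automorphism to be monomial, D P_s, with s preserving q.  By genericity s
   agrees with an element of G on every pair of indices not swapped by G.
   For G = <sig> cyclic, this makes s commute with sig and act on each
   sig-orbit as a power sig^(m_x); the exponents agree modulo the gcd of the
   orbit lengths, and the Chinese remainder theorem glues them into a single
   power of sig. *)

Set Implicit Arguments.
Unset Strict Implicit.
Unset Printing Implicit Defensive.
Import GRing.Theory.
Local Open Scope ring_scope.

Section QuantumRelations.
Variables (k : fieldType) (n : nat) (q : 'M[k]_n).

Lemma qrel_combinationE (c : 'M[k]_n) :
  \sum_(i < n) \sum_(j < n) c i j *: qrel q i j = c^T - \matrix_(i, j) (q i j * c i j).
Proof.
rewrite {1}[c^T]matrix_sum_delta [in RHS]exchange_big {1}[\matrix_(i, j) _]matrix_sum_delta.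
rewrite -sumrB; apply: eq_bigr => i _; rewrite -sumrB; apply: eq_bigr => j _.
by rewrite !mxE /qrel scalerBr scalerA [q i j * _]mulrC.
Qed.

Lemma in_qrel_span_scale_qrel (c : k) (x y : 'I_n) : in_qrel_span q (c *: qrel q x y).
Proof.
exists (c *: delta_mx x y); rewrite qrel_combinationE.
apply/matrixP => a b; rewrite !mxE andbC mulrBr mulrCA.
by case: (eqVneq a x) => [->|]; case: (eqVneq b y) => [->|]; rewrite ?andbF ?mulr0.
Qed.

Hypothesis q_quantum : quantum_param_matrix q.

Lemma in_qrel_span_diag M a : in_qrel_span q M -> M a a = 0.
Proof.
by case=> c ->; rewrite qrel_combinationE !mxE (q_quantum a a).1 mul1r subrr.
Qed.

Lemma in_qrel_span_skew M a b : in_qrel_span q M -> M a b + q a b * M b a = 0.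
Proof.
case=> c ->; rewrite qrel_combinationE !mxE mulrBr mulrA (q_quantum a b).2 mul1r.
by rewrite addrA subrK subrr.
Qed.

End QuantumRelations.

Section Monomial.
Variables (k : fieldType) (n : nat).
Implicit Types (q A : 'M[k]_n) (d : 'rV[k]_n) (s : 'S_n).

Definition monomial_mx d s : 'M[k]_n := diag_mx d *m perm_mx s.

Definition perm_invariant q s := forall i j, q (s i) (s j) = q i j.

Lemma perm_invariantV q s : perm_invariant q s -> perm_invariant q (s^-1)%g.
Proof. by move=> qs i j; rewrite -qs !permKV. Qed.

Lemma monomial_mxE d s a j : monomial_mx d s a j = d 0 a * (s a == j)%:R.
Proof. by rewrite /monomial_mx mul_diag_mx !mxE. Qed.

Lemma monomial_mxK d s : (forall i, d 0 i != 0) ->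
  monomial_mx d s *m monomial_mx (\row_x (d 0 ((s^-1)%g x))^-1) (s^-1)%g = 1%:M.
Proof.
move=> d_neq0; apply/matrixP => a b.
rewrite !mxE (bigD1 (s a)) //= big1 => [|x /negbTE sa_x]; last first.
  by rewrite monomial_mxE eq_sym sa_x mulr0 mul0r.
by rewrite !monomial_mxE !mxE eqxx mulr1 permK addr0 mulrA mulfV // mul1r.
Qed.

Lemma monomial_mx_unit d s : (forall i, d 0 i != 0) -> monomial_mx d s \in unitmx.
Proof. by move=> d_neq0; case: (mulmx1_unit (monomial_mxK s d_neq0)). Qed.

Lemma invmx_monomial d s : (forall i, d 0 i != 0) ->
  invmx (monomial_mx d s) = monomial_mx (\row_x (d 0 ((s^-1)%g x))^-1) (s^-1)%g.
Proof.
move=> d_neq0; have Au := monomial_mx_unit s d_neq0.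
by rewrite -[invmx _]mulmx1 -(monomial_mxK s d_neq0) mulmxA mulVmx // mul1mx.
Qed.

Lemma unitmx_row_disjoint_monomial A : A \in unitmx ->
    (forall a i j, i != j -> A a i * A a j = 0) ->
  exists2 d : 'rV[k]_n, (forall i, d 0 i != 0) & exists s : 'S_n, A = monomial_mx d s.
Proof.
move=> Au A_disj.
have /existsP[s /prodf_neq0 As] : [exists s : 'S_n, \prod_i A i (s i) != 0].
  apply: contraT; rewrite negb_exists => /forallP As0.
  move: Au; rewrite unitmxE unitfE /determinant big1 ?eqxx // => s _.
  by rewrite (eqP (negbNE (As0 s))) mulr0.
exists (\row_i A i (s i)) => [i|]; first by rewrite mxE As.
exists s; apply/matrixP => a j; rewrite monomial_mxE mxE.
have [<-|nj] := eqVneq (s a) j; first by rewrite mulr1.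
by move/eqP: (A_disj a _ _ nj); rewrite mulr0 mulf_eq0 (negbTE (As a isT)) => /eqP.
Qed.

Lemma conj_delta_mxE A u v a b : (A *m delta_mx u v *m A^T) a b = A a u * A b v.
Proof.
rewrite -[delta_mx u v](@mul_delta_mx _ n 1 n 0) mulmxA -colE -mulmxA -rowE.
by rewrite mxE big_ord1 !mxE.
Qed.

Lemma conj_monomial_delta d s u v :
  monomial_mx d s *m delta_mx u v *m (monomial_mx d s)^T =
  (d 0 ((s^-1)%g u) * d 0 ((s^-1)%g v)) *: delta_mx ((s^-1)%g u) ((s^-1)%g v).
Proof.
apply/matrixP => a b; rewrite conj_delta_mxE !monomial_mxE !mxE.
rewrite !(can2_eq (permK s) (permKV s)).
by case: eqVneq => [->|]; case: eqVneq => [->|]; rewrite ?mulr0 ?mul0r ?mulr1.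
Qed.

Lemma conj_qrelE q A i j a b :
  (A *m qrel q i j *m A^T) a b = A a j * A b i - q i j * (A a i * A b j).
Proof.
by rewrite /qrel mulmxBr mulmxBl -scalemxAr -scalemxAl -!conj_delta_mxE !mxE.
Qed.

Section Relations.
Variable q : 'M[k]_n.
Hypothesis q_quantum : quantum_param_matrix q.

Lemma preserves_qrel_row_disjoint A : (forall i j, i != j -> q i j != 1) ->
  preserves_qrel q A -> forall a i j, i != j -> A a i * A a j = 0.
Proof.
move=> q_neq1 Apres a i j nij; have := in_qrel_span_diag q_quantum a (Apres i j).
rewrite conj_qrelE mulrC -{1}[A a i * _]mul1r -mulrBl => /eqP.
by rewrite mulf_eq0 subr_eq0 eq_sym (negbTE (q_neq1 i j nij)) => /eqP.
Qed.

Lemma preserves_qrel_monomialP d s : (forall i, d 0 i != 0) ->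
  preserves_qrel q (monomial_mx d s) <-> perm_invariant q s.
Proof.
move=> d_neq0.
have conjE i j : monomial_mx d s *m qrel q i j *m (monomial_mx d s)^T =
    (d 0 ((s^-1)%g i) * d 0 ((s^-1)%g j)) *:
    (delta_mx ((s^-1)%g j) ((s^-1)%g i) - q i j *: delta_mx ((s^-1)%g i) ((s^-1)%g j)).
  rewrite /qrel mulmxBr mulmxBl -scalemxAr -scalemxAl !conj_monomial_delta.
  by rewrite scalerBr !scalerA [q i j * _]mulrC [d 0 (_ j) * _]mulrC.
split=> [Mpres x y | qs i j].
  have [<-|nxy] := eqVneq x y; first by rewrite (q_quantum x x).1 (q_quantum (s x) x).1.
  have := in_qrel_span_skew q_quantum x y (Mpres (s x) (s y)).
  rewrite conjE !mxE !permK !eqxx (negbTE nxy) eq_sym (negbTE nxy) /=.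
  rewrite !mulr0 !mulr1 sub0r subr0 mulr1 mulrN [q x y * _]mulrC addrC -mulrBr => /eqP.
  by rewrite !mulf_eq0 !(negbTE (d_neq0 _)) subr_eq0 => /eqP.
have := qs ((s^-1)%g i) ((s^-1)%g j); rewrite conjE !permKV => ->.
exact: in_qrel_span_scale_qrel.
Qed.

Lemma Aut_gr_monomialP A : (forall i j, i != j -> q i j != 1) ->
  Aut_gr q A <-> exists2 d : 'rV[k]_n, (forall i, d 0 i != 0) &
                  exists2 s : 'S_n, perm_invariant q s & A = monomial_mx d s.
Proof.
move=> q_neq1; split=> [[Au Apres _]|[d d_neq0 [s qs ->]]].
  have [d d_neq0 [s defA]] :=
    unitmx_row_disjoint_monomial Au (preserves_qrel_row_disjoint q_neq1 Apres).
  exists d => //; exists s => //.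
  by apply/(preserves_qrel_monomialP _ d_neq0); rewrite -defA.
split; first exact: monomial_mx_unit.
  exact/preserves_qrel_monomialP.
rewrite invmx_monomial //; apply/preserves_qrel_monomialP; last exact: perm_invariantV.
by move=> i; rewrite mxE invr_eq0.
Qed.

End Relations.
End Monomial.

Section GenericScalars.
Variable k : fieldType.

Definition generic_seq (t : seq k) :=
  [/\ uniq t, 0 \notin t & forall x y, x \in t -> y \in t -> x * y != 1].

Lemma exists_generic_seq (s : seq k) M : uniq s -> (2 * M + 4 <= size s)%N ->
  exists2 t, size t = M & generic_seq t.
Proof.
move=> s_uniq; elim: M => [|M IH] leMs; first by exists [::].
have [|t sz_t [t_uniq t_neq0 t_inv]] := IH; first by apply: leq_trans leMs; lia.
pose F := [:: 0; 1; -1] ++ t ++ map GRing.inv t.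
have [x xs xF] : exists2 x, x \in s & x \notin F.
  case: (boolP (all (mem F) s)) => [/allP sF|/allPn[x xs xF]]; last by exists x.
  have := uniq_leq_size s_uniq sF; rewrite !size_cat size_map sz_t /=; lia.
move: xF; rewrite !mem_cat !inE !negb_or => /and3P[/and3P[x_neq0 x_neq1 x_neqN1] xt xVt].
have xtV y : y \in t -> x * y != 1.
  move=> yt; have y_neq0 : y != 0 by apply: contraNneq t_neq0 => <-.
  by apply: contraNneq xVt => xy1; rewrite -[x](mulfK y_neq0) xy1 div1r map_f.
exists (x :: t); first by rewrite /= sz_t.
split; [by rewrite /= xt | by rewrite inE negb_or eq_sym x_neq0 |].
move=> u v; rewrite !inE => /predU1P[->|ut] /predU1P[->|vt].
- by rewrite -expr2 sqrf_eq1 negb_or x_neq1.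
- exact: xtV.
- by rewrite mulrC xtV.
- exact: t_inv.
Qed.

Definition generic_family (T : Type) (a : T -> k) :=
  [/\ injective a, forall x, a x != 0 & forall x y, a x * a y != 1].

Lemma exists_generic_family (T : finType) :
  card_at_least k (2 * #|T| + 4) -> exists a : T -> k, generic_family a.
Proof.
case=> s [s_uniq le_s].
have [t sz_t [t_uniq t_neq0 t_inv]] := exists_generic_seq s_uniq le_s.
have t_nth (x : T) : nth 0 t (enum_rank x) \in t by rewrite mem_nth ?sz_t.
exists (fun x => nth 0 t (enum_rank x)); split=> [x y /eqP|x|x y].
- by rewrite nth_uniq ?sz_t // => /eqP/val_inj/enum_rank_inj.
- by apply: contraNneq t_neq0 => <-; apply: t_nth.
- exact: t_inv (t_nth x) (t_nth y).
Qed.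

End GenericScalars.

Lemma chinese_remainder2 (l1 l2 : nat) (r1 r2 : int) :
  ((gcdn l1 l2)%:Z %| r1 - r2)%Z ->
  exists X : int, (l1%:Z %| X - r1)%Z /\ (l2%:Z %| X - r2)%Z.
Proof.
case/dvdzP=> w r12; have [u [v uv]] := Bezoutz l1 l2.
exists (r1 - u * l1%:Z * w); split.
  by rewrite addrAC subrr add0r rpredN -mulrA mulrC -mulrA dvdz_mulr.
have -> : r1 - u * l1%:Z * w - r2 = w * v * l2%:Z.
  by rewrite addrAC r12 -[(gcdn l1 l2)%:Z]/(gcdz l1 l2) -uv; ring.
exact: dvdz_mull.
Qed.

Lemma chinese_remainder_seq (I : eqType) (l : I -> nat) (r : I -> int) (s : seq I) :
  (forall i j, i \in s -> j \in s -> ((gcdn (l i) (l j))%:Z %| r i - r j)%Z) ->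
  exists X : int, forall i, i \in s -> ((l i)%:Z %| X - r i)%Z.
Proof.
elim: s => [|i s IH] compat; first by exists 0.
have [|X0 X0s] := IH.
  by move=> x y xs ys; apply: compat; rewrite inE ?xs ?ys orbT.
have gcd_compat : ((gcdn (\big[lcmn/1%N]_(j <- s) l j) (l i))%:Z %| X0 - r i)%Z.
  rewrite dvdzE big_seq; elim/big_ind: _ => [|p q|j js].
  - by rewrite gcd1n dvd1n.
  - (* gcd distributes over lcm *)
    by rewrite Order.NatDvd.meetUl dvdn_lcm => -> ->.
  have -> : X0 - r i = (X0 - r j) + (r j - r i) by rewrite addrA subrK.
  rewrite -dvdzE rpredD //; last by apply: compat; rewrite inE ?js ?eqxx ?orbT.
  by apply: dvdz_trans (X0s j js); rewrite dvdzE dvdn_gcdl.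
have [X [X0X Xi]] := chinese_remainder2 gcd_compat.
exists X => j; rewrite inE => /predU1P[->//|js].
have -> : X - r j = (X - X0) + (X0 - r j) by rewrite addrA subrK.
rewrite rpredD ?X0s //; apply: dvdz_trans X0X.
by rewrite dvdzE (big_rem j js) dvdn_lcml.
Qed.

Section PairOrbits.
Variables (n : nat) (G : {group 'S_n}).
Implicit Types (i j u v : 'I_n) (g : 'S_n).

Definition pair_orbit i j : {set 'I_n * 'I_n} := [set (g i, g j) | g : 'S_n in G].

Definition swapped i j := pair_orbit j i == pair_orbit i j.

Lemma pair_orbit_act g i j : g \in G -> pair_orbit (g i) (g j) = pair_orbit i j.
Proof.
move=> gG; apply/setP => -[x y]; apply/imsetP/imsetP => -[h hG ->].
  by exists (g * h)%g; rewrite ?groupM // !permM.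
by exists (g^-1 * h)%g; rewrite ?groupM ?groupV // !permM !permK.
Qed.

Lemma mem_pair_orbitE i j u v :
  ((u, v) \in pair_orbit i j) = (pair_orbit u v == pair_orbit i j).
Proof.
apply/idP/eqP => [/imsetP[g gG [-> ->]]|<-]; first exact: pair_orbit_act.
by apply/imsetP; exists 1%g; rewrite ?group1 ?perm1.
Qed.

Lemma mem_pair_orbitC i j u v : ((v, u) \in pair_orbit j i) = ((u, v) \in pair_orbit i j).
Proof. by apply/imsetP/imsetP => -[g gG [-> ->]]; exists g. Qed.

Lemma swappedP i j : reflect (exists2 g, g \in G & g i = j /\ g j = i) (swapped i j).
Proof.
rewrite /swapped -mem_pair_orbitE.
by apply: (iffP imsetP) => -[g gG [gi gj]]; exists g => //; rewrite gi gj.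
Qed.

Lemma swapped_act g i j : g \in G -> swapped (g i) (g j) = swapped i j.
Proof. by move=> gG; rewrite /swapped !pair_orbit_act. Qed.

Lemma swapped_even i j : i != j -> swapped i j -> ~~ odd #|G|.
Proof.
move=> nij /swappedP[g gG [gi gj]]; apply/negP => oddG.
have odd_g : odd #[g]%g := dvdn_odd (order_dvdG gG) oddG.
have g2i : (g ^+ 2)%g i = i by rewrite expgS expg1 permM gi gj.
have g_sq : (g ^+ (2 * (#[g]%g.+1)./2) = g)%g.
  have -> : (2 * (#[g]%g.+1)./2 = #[g]%g.+1)%N.
    by rewrite mul2n -[RHS]odd_double_half /= odd_g.
  by rewrite expgSr expg_order mul1g.
by move: nij; rewrite -gi -g_sq expgM permX_fix ?eqxx.
Qed.

Section QuantumParameters.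
Variables (k : fieldType) (a : {set 'I_n * 'I_n} -> k).

(* Comparing enum_ranks just orients each pair of mutually reverse orbits,
   so that q_ji = q_ij^-1. *)
Definition qmat : 'M[k]_n := \matrix_(i, j)
  if i == j then 1 else if swapped i j then -1
  else if (enum_rank (pair_orbit i j) < enum_rank (pair_orbit j i))%N
  then a (pair_orbit i j) else (a (pair_orbit j i))^-1.

Lemma qmat_act g : g \in G -> perm_invariant qmat g.
Proof.
by move=> gG i j; rewrite !mxE (inj_eq perm_inj) swapped_act // !pair_orbit_act.
Qed.

Lemma qmat_offdiag i j : i != j -> ~~ swapped i j ->
  qmat i j = a (pair_orbit i j) \/ qmat i j = (a (pair_orbit j i))^-1.
Proof. by move=> nij ns; rewrite mxE (negbTE nij) (negbTE ns); case: ifP; [left|right]. Qed.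

Hypothesis a_generic : generic_family a.

Lemma qmat_quantum : quantum_param_matrix qmat.
Proof.
have [_ a_neq0 _] := a_generic.
move=> i j; rewrite !mxE eqxx; split=> //.
have [_|nij] := eqVneq i j; first by rewrite mulr1.
rewrite [swapped j i]/swapped eq_sym -/(swapped i j).
case: ifP => [_|/negbT ns]; first by rewrite mulrNN mulr1.
have ranks_neq : enum_rank (pair_orbit i j) != enum_rank (pair_orbit j i) :> nat.
  by rewrite (inj_eq val_inj) (inj_eq enum_rank_inj) eq_sym.
by case: ltngtP ranks_neq => // _ _; rewrite ?mulfV ?mulVf ?a_neq0.
Qed.

Lemma qmat_offdiag_sign i j : i != j -> ~~ swapped i j -> qmat i j != 1 /\ qmat i j != -1.
Proof.
move=> nij ns; have [_ _ a_sq] := a_generic.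
have : qmat i j ^+ 2 != 1.
  by case: (qmat_offdiag nij ns) => ->; rewrite ?exprVn ?invr_eq1 expr2 a_sq.
by rewrite sqrf_eq1 negb_or => /andP.
Qed.

Lemma qmat_neq1 : (~~ odd #|G| -> (2%:R : k) != 0) -> forall i j, i != j -> qmat i j != 1.
Proof.
move=> char_neq2 i j nij; have [sw|ns] := boolP (swapped i j); last first.
  by case: (qmat_offdiag_sign nij ns).
rewrite mxE (negbTE nij) sw; apply: contra (char_neq2 (swapped_even nij sw)) => /eqP e.
by rewrite mulr2n -{1}e addNr.
Qed.

Lemma qmat_eq_orbit i j u v : i != j -> ~~ swapped i j ->
  qmat u v = qmat i j -> (u, v) \in pair_orbit i j.
Proof.
move=> nij ns quv; have [q_neq1 q_neqN1] := qmat_offdiag_sign nij ns.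
have nuv : u != v by apply: contra q_neq1 => /eqP uv; rewrite -quv uv mxE eqxx.
have nsuv : ~~ swapped u v.
  by apply: contra q_neqN1 => sw; rewrite -quv mxE (negbTE nuv) sw.
have [a_inj a_neq0 a_sq] := a_generic.
have a_neqV O O' : a O != (a O')^-1.
  by apply: contra (a_sq O O') => /eqP ->; rewrite mulVf.
case: (qmat_offdiag nuv nsuv) (qmat_offdiag nij ns) => -> [] -> in quv.
- by rewrite mem_pair_orbitE (a_inj _ _ quv).
- by move: (a_neqV (pair_orbit u v) (pair_orbit j i)); rewrite quv eqxx.
- by move: (a_neqV (pair_orbit i j) (pair_orbit v u)); rewrite -quv eqxx.
- by rewrite -mem_pair_orbitC mem_pair_orbitE (a_inj _ _ (invr_inj quv)).
Qed.

End QuantumParameters.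
End PairOrbits.

Lemma eq_permX_porbit (T : finType) (s : {perm T}) x a b :
  ((s ^+ a)%g x == (s ^+ b)%g x) = (#|porbit s x|%:Z %| a%:Z - b%:Z)%Z.
Proof.
have L_gt0 : (0 < #|porbit s x|)%N by rewrite lt0n card_porbit_neq0.
have iter_mod c : iter c s x = iter (c %% #|porbit s x|) s x.
  rewrite {1}(divn_eq c #|porbit s x|) addnC iterD; congr (iter _ _ _).
  by elim: (c %/ _)%N => // e IHe; rewrite mulSn iterD IHe iter_porbit.
rewrite -eqz_mod_dvd !modz_nat eqz_nat !permX (iter_mod a) (iter_mod b).
rewrite -!(nth_traject _ (ltn_pmod _ L_gt0)) nth_uniq ?size_traject ?ltn_pmod //.
exact: uniq_traject_porbit.
Qed.

Lemma commute_perm_app (T : finType) (s t : {perm T}) x : commute s t -> s (t x) = t (s x).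
Proof. by move=> st; rewrite -!permM st. Qed.

Section LocallyInCycle.
Variables (n : nat) (sig pi : 'S_n) (G : {group 'S_n}).
Hypothesis defG : G :=: <[sig]>%g.
Hypothesis pi_local : forall i j, i != j -> ~~ swapped G i j ->
  (pi i, pi j) \in pair_orbit G i j.

Let commute_sig g : g \in G -> commute g sig.
Proof. by rewrite defG => /cycleP[m ->]; apply/commute_sym/commuteX. Qed.

Lemma local_orbit x : exists2 g, g \in G & g x = pi x.
Proof.
have [/existsP[y /forall_inP x_y]|] := boolP [exists y, [forall g in G, g x != y]].
  have nxy : x != y by have := x_y 1%g (group1 _); rewrite perm1.
  have ns : ~~ swapped G x y.
    by apply/swappedP => -[g gG [gx _]]; have := x_y g gG; rewrite gx eqxx.
  by case/imsetP: (pi_local nxy ns) => g gG [-> _]; exists g.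
rewrite negb_exists => /forallP /(_ (pi x)) /forall_inPn[g gG /negPn/eqP gx].
by exists g.
Qed.

Lemma local_commute : commute pi sig.
Proof.
apply/permP => x; rewrite !permM; have [g gG gx] := local_orbit x.
have sig_g h y : h \in G -> h (sig y) = sig (h y).
  by move=> hG; apply: commute_perm_app; apply: commute_sig.
have [sx|nsx] := eqVneq (sig x) x; first by rewrite sx -gx -sig_g ?sx.
have [s2x|ns2x] := eqVneq (sig (sig x)) x.
  have orbit2 h : h \in G -> h x = x \/ h x = sig x.
    rewrite defG => /cycleP[m ->]; elim: m => [|m IHm]; first by left; rewrite perm1.
    by rewrite expgSr permM; case: IHm => ->; [right | left].
  have [h hG hsx] := local_orbit (sig x).
  suff gh : g x = h x by rewrite -hsx sig_g // -gx gh.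
  have : pi x != pi (sig x) by rewrite (inj_eq perm_inj) eq_sym.
  rewrite -gx -hsx sig_g //.
  by case: (orbit2 g gG) (orbit2 h hG) => -> [] ->; rewrite ?s2x ?eqxx.
have nxsx : x != sig x by rewrite eq_sym.
have ns : ~~ swapped G x (sig x).
  apply/swappedP => -[h hG [hx hsx]].
  by move: ns2x; rewrite -{2}hsx sig_g // hx eqxx.
by case/imsetP: (pi_local nxsx ns) => h hG [-> ->]; rewrite sig_g.
Qed.

Lemma local_pair x y : exists2 g, g \in G & g x = pi x /\ g y = pi y.
Proof.
have [/existsP[g0 /andP[g0G /eqP g0x]]|no_g] := boolP [exists g in G, g x == y].
  have [g gG gx] := local_orbit x; exists g => //; split=> //.
  move: g0G; rewrite defG -g0x => /cycleP[m ->].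
  rewrite (commute_perm_app _ (commuteX m (commute_sig gG))) gx.
  by rewrite (commute_perm_app _ (commuteX m local_commute)).
have nxy : x != y.
  by apply: contraNneq no_g => <-; apply/existsP; exists 1%g; rewrite group1 perm1 eqxx.
have ns : ~~ swapped G x y.
  by apply: contra no_g => /swappedP[g gG [gx _]]; apply/existsP; exists g; rewrite gG gx eqxx.
by case/imsetP: (pi_local nxy ns) => g gG [-> ->]; exists g.
Qed.

Lemma local_mem : pi \in G.
Proof.
pose L x := #|porbit sig x|.
have /fin_all_exists[m mE] x : exists e : nat, (sig ^+ e)%g x = pi x.
  by have [g] := local_orbit x; rewrite defG => /cycleP[e ->]; exists e.
have [X XmE] : exists X : int, forall x, x \in enum 'I_n -> ((L x)%:Z %| X - (m x)%:Z)%Z.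
  apply: chinese_remainder_seq => x y _ _.
  have [g] := local_pair x y; rewrite defG => /cycleP[e ->] [ex ey].
  have /eqP := etrans ex (esym (mE x)); rewrite eq_permX_porbit => Lx.
  have /eqP := etrans ey (esym (mE y)); rewrite eq_permX_porbit => Ly.
  have -> : (m x)%:Z - (m y)%:Z = (e%:Z - (m y)%:Z) - (e%:Z - (m x)%:Z) by ring.
  rewrite rpredB //; [apply: dvdz_trans Ly | apply: dvdz_trans Lx];
    by rewrite dvdzE ?dvdn_gcdr ?dvdn_gcdl.
set N := #[sig]%g.
have L_dvd_N x : (L x %| N)%N.
  by have := eq_permX_porbit sig x N 0; rewrite expg_order expg0 eqxx subr0 => /esym.
pose e := absz (X %% N%:Z)%Z.
have eE : e%:Z = (X %% N%:Z)%Z by rewrite /e gez0_abs // modz_ge0 // eqz_nat -lt0n order_gt0.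
suff -> : pi = (sig ^+ e)%g by rewrite defG mem_cycle.
apply/permP => x; rewrite -mE; apply/eqP; rewrite eq_permX_porbit eE.
have -> : (m x)%:Z - (X %% N%:Z)%Z = (X %/ N%:Z)%Z * N%:Z - (X - (m x)%:Z).
  by rewrite {3}(divz_eq X N%:Z); ring.
by rewrite rpredB ?dvdz_mull ?XmE ?mem_enum // dvdzE L_dvd_N.
Qed.

End LocallyInCycle.

Unset Implicit Arguments.

Theorem proposition3p4 (n : nat) (G : {group 'S_n}) :
  (1 <= n)%N -> cyclic G ->
  exists N : nat, forall k : fieldType,
    card_at_least k N ->
    (~~ odd #|G| -> (2%:R : k) != 0) ->
    exists q : 'M[k]_n, quantum_param_matrix q /\
      (forall A : 'M[k]_n, Aut_gr q A <-> monomial_group G A).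
Proof.
(* The construction works for n = 0 as well. *)
move=> _ /cyclicP[sig defG].
exists (2 * #|{: {set 'I_n * 'I_n}}| + 4)%N => k card_k char_k.
have [a a_generic] := exists_generic_family card_k.
exists (qmat G a); split=> [|A]; first exact: qmat_quantum.
rewrite Aut_gr_monomialP; [|exact: qmat_quantum | exact: qmat_neq1].
split=> [[d d_neq0 [s q_s ->]] | [d [d_neq0 [s sG ->]]]].
  exists d; split=> //; exists s => //.
  apply: (local_mem defG) => i j nij ns.
  by apply: (qmat_eq_orbit a_generic nij ns); exact: (q_s i j).
by exists d => //; exists s; first exact: qmat_act.
Qed.
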